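(* Let $s\ge2$, $\delta\ge2$, and let $\mathcal{C}$ be an $[n,k,d]_q$ linear code with multiple $(r_i,\delta)_{i\in[s]}$ localities (i.e. $\delta_1=\dots=\delta_s=\delta$) with respect to a partition $\mathcal{T}_1,\dots,\mathcal{T}_s$ of $[n]$, $n_i=|\mathcal{T}_i|$, $r_1\le\dots\le r_s$. Let $\Delta_0=0$ and $\Delta_j=\sum_{i=1}^{j}\lceil n_i/(r_i+\delta-1)\rceil(\delta-1)$ for $j=1,\dots,s-1$. Suppose $\sum_{i=1}^{s-1}r_i\lceil n_i/(r_i+\delta-1)\rceil\le k-1$ and, for each $j=1,\dots,s-1$, $$r_j\left\lceil\frac{\Delta_j-\Delta_{j-1}-1}{\delta-1}\right\rceil+(\Delta_j-\Delta_{j-1}-1)<n_j.$$ Then $d\le n-k+1-(\Gamma-1)(\delta-1)$, where $$\Gamma=\sum_{i=1}^{s-1}\left\lceil\frac{n_i}{r_i+\delta-1}\right\rceil+\left\lceil\frac{k-\sum_{i=1}^{s-1}r_i\lceil n_i/(r_i+\delta-1)\rceil}{r_s}\right\rceil.$$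
   Context: $[n]=\{1,\dots,n\}$. For an $[n,k,d]_q$ linear code with generator matrix columns $\vec g_1,\dots,\vec g_n$, a regenerating set of coordinate $i$ is a (minimal) subset $R\subseteq[n]$ with $i\in R$ such that $\vec g_i$ is an $\mathbb{F}_q$-linear combination of $\{\vec g_j\}_{j\in R\setminus\{i\}}$ and no proper subset of $R\setminus\{i\}$ suffices; $\mathcal{R}_i$ is the set of regenerating sets of coordinate $i$. Multiple $(r_i,\delta)_{i\in[s]}$ localities: $\mathcal{T}_1,\dots,\mathcal{T}_s$ is a partition of $[n]$, $r_1\le\dots\le r_s$ are integers, and for each $i\in[s]$ and each $\iota\in\mathcal{T}_i$ there is $S_\iota\subseteq\mathcal{T}_i$ with $\iota\in S_\iota$, $\delta\le|S_\iota|\le r_i+\delta-1$, such that for every $E\subseteq S_\iota$ with $|E|=\delta-1$ and every $j\in E$, $(S_\iota\setminus E)\cup\{j\}\in\mathcal{R}_j$. *)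

From HB Require Import structures.
From mathcomp Require Import all_boot all_order all_algebra all_field.
Set Implicit Arguments. Unset Strict Implicit. Unset Printing Implicit Defensive.
Import GRing.Theory.
Local Open Scope ring_scope.

Definition ceildiv (a b : nat) : nat := ((a + b).-1 %/ b)%N.

Section Codes.
Variables (F : finFieldType) (k n : nat) (G : 'M[F]_(k, n)).

Definition wt (v : 'rV[F]_n) : nat := #|[set j : 'I_n | v 0 j != 0]|.

Definition is_min_dist (d : nat) : Prop :=
  (exists m : 'rV[F]_k, m *m G != 0 /\ wt (m *m G) = d) /\
  (forall m : 'rV[F]_k, m *m G != 0 -> (d <= wt (m *m G))%N).

Definition in_col_span (v : 'cV[F]_k) (S : {set 'I_n}) : Prop :=
  exists c : 'I_n -> F, v = \sum_(j in S) c j *: col j G.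

Definition regen_set (i : 'I_n) (R : {set 'I_n}) : Prop :=
  i \in R /\ in_col_span (col i G) (R :\ i) /\
  (forall S : {set 'I_n}, S \proper (R :\ i) -> ~ in_col_span (col i G) S).

(* Multiple (r_i, delta)_{i in [s]} localities w.r.t. T_1..T_s (1-based) *)
Definition multiple_localities (s : nat) (T : nat -> {set 'I_n})
  (r : nat -> nat) (delta : nat) : Prop :=
  (forall i, (1 <= i <= s)%N -> T i != set0) /\
  (forall i j, (1 <= i <= s)%N -> (1 <= j <= s)%N -> i <> j ->
      [disjoint T i & T j]) /\
  (forall x : 'I_n, exists i, (1 <= i <= s)%N /\ x \in T i) /\
  (forall i, (1 <= i <= s)%N -> (0 < r i)%N) /\
  (forall i j, (1 <= i)%N -> (i <= j <= s)%N -> (r i <= r j)%N) /\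
  (forall i, (1 <= i <= s)%N -> forall iota, iota \in T i ->
     exists S : {set 'I_n}, S \subset T i /\ iota \in S /\
       (delta <= #|S| <= r i + delta - 1)%N /\
       forall E : {set 'I_n}, E \subset S -> #|E| = delta.-1 ->
         forall j, j \in E -> regen_set j ((S :\: E) :|: [set j])).

End Codes.

Definition Delta (nT r : nat -> nat) (delta j : nat) : nat :=
  (\sum_(1 <= i < j.+1) ceildiv (nT i) (r i + delta - 1) * (delta - 1))%N.

Definition Gamma (nT r : nat -> nat) (delta s k : nat) : nat :=
  (\sum_(1 <= i < s) ceildiv (nT i) (r i + delta - 1) +
   ceildiv (k - \sum_(1 <= i < s) r i * ceildiv (nT i) (r i + delta - 1)) (r s))%N.

From mathcomp Require Import all_boot all_order all_algebra all_field zify.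
Set Implicit Arguments. Unset Strict Implicit. Unset Printing Implicit Defensive.
Import GRing.Theory.

(* Write rank X for the rank of the columns g_j, j in X.  If rank X < k, some
   nonzero codeword vanishes on X, and enlarging X by columns outside its span
   until the rank reaches k - 1 gives d <= n - k + 1 - (|X| - rank X).  So it
   suffices to build X with rank X < k and |X| - rank X >= (Gamma - 1)(delta - 1).
   This is done greedily with repair groups: any |S| - delta + 1 points of a
   repair group S span it, so a group containing a column outside the span of X
   meets X in at most |S| - delta points, and adding it raises rank X by at most
   |S| - delta + 1 <= r_i while raising |X| - rank X by at least delta - 1.  The
   hypothesis on Delta_j leaves room for ceil(n_j / (r_j + delta - 1)) groups
   inside each T_j, j < s; then ceil((k - sum_j r_j ceil(...)) / r_s) - 1 more
   groups, taken anywhere, still keep the rank below k. *)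

Lemma subset_card_between (T : finType) (A C : {set T}) m :
  A \subset C -> #|A| <= m <= #|C| ->
  exists B : {set T}, [/\ A \subset B, B \subset C & #|B| = m].
Proof.
move=> AC; elim: m => [|m IH] /andP[Am mC].
  by exists A; split=> //; apply/eqP; rewrite -leqn0.
have [Am1 | neq_Am] := eqVneq #|A| m.+1; first by exists A.
have [B [AB BC cardB]] : exists B : {set T}, [/\ A \subset B, B \subset C & #|B| = m].
  by apply: IH; apply/andP; split; lia.
have /properP[_ [x xC xB]] : B \proper C by rewrite properEcard BC cardB.
exists (x |: B); split; first exact: subset_trans AB (subsetUr _ _).
  by rewrite subUset sub1set xC.
by rewrite cardsU1 xB cardB.
Qed.

Lemma ceildiv_gt0 a b : 0 < a -> 0 < b -> 0 < ceildiv a b.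
Proof. by move=> a_gt0 b_gt0; rewrite /ceildiv divn_gt0 //; lia. Qed.

Lemma ceildiv_pred_mul_lt a b : 0 < a -> 0 < b -> (ceildiv a b).-1 * b < a.
Proof.
move=> a_gt0 b_gt0; rewrite /ceildiv -subn1 mulnBl mul1n.
have := leq_divM (a + b).-1 b; lia.
Qed.

Lemma pred_leq_ceildiv c b : 0 < b -> c.-1 <= ceildiv (c * b - 1) b.
Proof.
move=> b_gt0; rewrite /ceildiv leq_divRL //.
case: c => [|c] //=; rewrite mulSn; lia.
Qed.

Section ColumnRank.
Variables (F : finFieldType) (k n : nat) (G : 'M[F]_(k, n)).
Implicit Types (A B E P X Y : {set 'I_n}) (j : 'I_n).

Definition cols_mx X : 'M[F]_(n, k) :=
  \matrix_(j, l) (if j \in X then G l j else 0%R).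

Local Notation rank_cols X := (\rank (cols_mx X)).
Local Notation col_spanned j X := (((col j G)^T)%R <= cols_mx X)%MS.

Lemma row_cols_mx X j :
  row j (cols_mx X) = if j \in X then ((col j G)^T)%R else 0%R.
Proof. by apply/rowP => l; rewrite !mxE; case: (j \in X); rewrite ?mxE. Qed.

Lemma col_sub_cols_mx X j : j \in X -> col_spanned j X.
Proof. by move=> jX; have := row_sub j (cols_mx X); rewrite row_cols_mx jX. Qed.

Lemma cols_mx_sub X Y :
  (forall j, j \in Y -> col_spanned j X) -> (cols_mx Y <= cols_mx X)%MS.
Proof.
by move=> YX; apply/row_subP => j; rewrite row_cols_mx; case: ifP => [/YX|_]; rewrite ?sub0mx.
Qed.

Lemma cols_mxS X Y : X \subset Y -> (cols_mx X <= cols_mx Y)%MS.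
Proof. by move=> /subsetP XY; apply: cols_mx_sub => j /XY /col_sub_cols_mx. Qed.

Lemma in_col_span_sub v X Y :
  in_col_span G v X -> X \subset Y -> ((v^T)%R <= cols_mx Y)%MS.
Proof.
move=> [c ->] /subsetP XY; rewrite linear_sum /= summx_sub // => j /XY jY.
by rewrite linearZ /= scalemx_sub // col_sub_cols_mx.
Qed.

Lemma rank_colsU X Y : rank_cols (X :|: Y) <= rank_cols X + rank_cols Y.
Proof.
have XY_sub : (cols_mx (X :|: Y) <= cols_mx X + cols_mx Y)%MS.
  apply/row_subP => j; rewrite row_cols_mx inE; case: ifP => [|_]; last exact: sub0mx.
  case/orP=> /col_sub_cols_mx jXY.
    exact: submx_trans jXY (addsmxSl _ _).
  exact: submx_trans jXY (addsmxSr _ _).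
exact: leq_trans (mxrankS XY_sub) (mxrank_adds_leqif _ _).
Qed.

Lemma rank_cols_card X : rank_cols X <= #|X|.
Proof.
pose M := (\matrix_(i < #|X|) (col (enum_val i) G)^T)%R.
have XM : (cols_mx X <= M)%MS.
  apply/row_subP => j; rewrite row_cols_mx; case: ifP => [jX|_]; last exact: sub0mx.
  by rewrite -[j in (col j G)](enum_rankK_in jX jX) -(rowK (fun i => (col (enum_val i) G)^T)%R) row_sub.
exact: leq_trans (mxrankS XM) (rank_leq_row _).
Qed.

Lemma rank_colsU1 X j :
  ~~ col_spanned j X -> rank_cols (j |: X) = (rank_cols X).+1.
Proof.
move=> jX; apply/eqP; rewrite eqn_leq.
have -> /= : (rank_cols X < rank_cols (j |: X)).
  apply: rank_ltmx; rewrite ltmxE cols_mxS ?subsetUr //=.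
  by apply: contra jX => /(submx_trans _); apply; rewrite col_sub_cols_mx // setU11.
rewrite andbT (leq_trans (rank_colsU _ _)) // -add1n leq_add2r.
by rewrite -(cards1 j) rank_cols_card.
Qed.

Section MinimumDistance.

Hypothesis G_free : row_free G.

Lemma rank_colsT : rank_cols setT = k.
Proof.
have -> : cols_mx setT = (G^T)%R by apply/matrixP => j l; rewrite !mxE inE.
by rewrite mxrank_tr; apply/eqP.
Qed.

Lemma col_notin_span X : rank_cols X < k -> exists j, ~~ col_spanned j X.
Proof.
move=> ltXk; apply/existsP; rewrite -negb_forall; apply: contraL ltXk => /forallP Xall.
have /mxrankS : (cols_mx setT <= cols_mx X)%MS by apply: cols_mx_sub => j _; exact: Xall.
by rewrite rank_colsT -leqNgt.
Qed.

Variable d : nat.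
Hypothesis d_min : is_min_dist G d.

Lemma min_dist_card_compl X : rank_cols X < k -> d + #|X| <= n.
Proof.
move=> ltXk.
have /rowV0Pn[m /sub_kermxP mX m0] : (kermx (cols_mx X)^T != 0)%R.
  by rewrite -mxrank_eq0 mxrank_ker mxrank_tr; lia.
have mG_X j : j \in X -> (m *m G)%R 0%R j = 0%R.
  move=> jX; move/matrixP/(_ ord0 j): mX; rewrite !mxE => mXj.
  by apply: etrans _ mXj; apply: eq_bigr => l _; rewrite !mxE jX.
have mG0 : (m *m G != 0)%R by rewrite mulmx_free_eq0.
have supp : #|[set j | (m *m G)%R 0%R j != 0%R]| <= #|~: X|.
  by apply/subset_leq_card/subsetP => i; rewrite !inE; apply: contra => /mG_X ->.
have /leq_trans/(_ supp) := d_min.2 m mG0; have := cardsC X; rewrite card_ord; lia.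
Qed.

Lemma singleton_bound_cols X :
  rank_cols X < k -> d + #|X| + k <= n + 1 + rank_cols X.
Proof.
have [m] := ubnP (k - rank_cols X); elim: m X => // m IH X ltm ltXk.
have dX := min_dist_card_compl ltXk.
have [|ltX1k] := leqP k (rank_cols X).+1; first lia.
have [j jX] := col_notin_span ltXk.
have jnX : j \notin X by apply: contra jX => /col_sub_cols_mx.
have rjX := rank_colsU1 jX.
have := IH (j |: X); rewrite rjX cardsU1 jnX; lia.
Qed.

End MinimumDistance.

Section RepairGroups.
Variable delta : nat.

Definition repair_group A : Prop :=
  forall E, E \subset A -> #|E| = delta.-1 ->
    forall j, j \in E -> regen_set G j ((A :\: E) :|: [set j]).

Lemma repair_group_span A B :
  repair_group A -> B \subset A -> #|B| + delta.-1 = #|A| ->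
  (cols_mx A <= cols_mx B)%MS.
Proof.
move=> gA BA cardB; apply: cols_mx_sub => j jA.
have [jB | jnB] := boolP (j \in B); first exact: col_sub_cols_mx.
have cardAB : #|A :\: B| = delta.-1.
  by have := cardsID B A; rewrite (setIidPr BA); lia.
have jAB : j \in A :\: B by rewrite inE jnB.
have [_ [span_j _]] := gA _ (subsetDl A B) cardAB j jAB.
apply: in_col_span_sub span_j _.
rewrite setDDr setDv set0U (setIidPr BA).
by apply/subsetP => x; rewrite !inE => /andP[/negbTE ->]; rewrite orbF.
Qed.

Lemma repair_group_meet A X j :
  delta <= #|A| -> repair_group A -> j \in A -> ~~ col_spanned j X ->
  #|A :&: X| + delta <= #|A|.
Proof.
move=> geA gA jA; rewrite leqNgt; apply: contra => ltA.
have bounds : #|set0 : {set 'I_n}| <= #|A| - delta.-1 <= #|A :&: X|.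
  by rewrite cards0; lia.
have [B [_ BAX cardB]] := subset_card_between (sub0set (A :&: X)) bounds.
have spanA := repair_group_span gA (subset_trans BAX (subsetIl _ _)).
apply: submx_trans (col_sub_cols_mx jA) (submx_trans (spanA _) (cols_mxS _)); first lia.
exact: subset_trans BAX (subsetIr _ _).
Qed.

Lemma rank_cols_add_group X A j rho :
  delta <= #|A| <= rho + delta - 1 -> repair_group A -> j \in A ->
  ~~ col_spanned j X ->
  rank_cols (X :|: A) <= rank_cols X + rho /\
  rank_cols (X :|: A) + delta.-1 + #|X| <= #|X :|: A| + rank_cols X.
Proof.
move=> /andP[geA leA] gA jA jX.
have meet := repair_group_meet geA gA jA jX.
have bounds : #|A :&: X| <= #|A| - delta.-1 <= #|A| by lia.
have [B [AXB BA cardB]] := subset_card_between (subsetIl A X) bounds.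
have spanA := repair_group_span gA BA (_ : #|B| + delta.-1 = #|A|).
have BX : B :&: X = A :&: X.
  by apply/eqP; rewrite eqEsubset setSI //= subsetI AXB subsetIr.
have span_XA : (cols_mx (X :|: A) <= cols_mx (X :|: (B :\: X)))%MS.
  apply: cols_mx_sub => l; rewrite inE => /orP[lX | lA].
    by rewrite col_sub_cols_mx // inE lX.
  apply: submx_trans (col_sub_cols_mx lA) (submx_trans (spanA _) (cols_mxS _)); first lia.
  by apply/subsetP => x xB; rewrite !inE xB; case: (x \in X).
have rank_XA := leq_trans (mxrankS span_XA) (rank_colsU X (B :\: X)).
have := rank_cols_card (B :\: X); rewrite cardsD BX.
have := subset_leq_card AXB; have := cardsU X A; rewrite setIC.
lia.
Qed.

Section Greedy.
Variables (P : {set 'I_n}) (rho : nat).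
Hypothesis P_groups : forall j, j \in P ->
  exists A, [/\ A \subset P, j \in A, delta <= #|A| <= rho + delta - 1 & repair_group A].

(* Either t groups were added, or P was spanned after fewer than t of them. *)
Lemma greedy_repair_groups X0 (t : nat) :
  exists2 X : {set 'I_n}, X \subset X0 :|: P &
    (rank_cols X <= rank_cols X0 + t * rho /\
     rank_cols X + t * delta.-1 + #|X0| <= #|X| + rank_cols X0) \/
    ((cols_mx P <= cols_mx X)%MS /\ rank_cols X <= rank_cols X0 + t.-1 * rho).
Proof.
elim: t => [|t [X XP IH]].
  by exists X0; [exact: subsetUl | left; split; lia].
case: IH => [[rankX nullX] | [spanP rankX]]; last first.
  exists X => //; right; split=> //; apply: leq_trans rankX _.
  by rewrite leq_add2l leq_mul2r leq_pred orbT.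
have [/exists_inP[j jP jX] | ] := boolP [exists j in P, ~~ col_spanned j X].
  have [A [AP jA cardA gA]] := P_groups jP.
  have [rankXA nullXA] := rank_cols_add_group cardA gA jA jX.
  exists (X :|: A); first by rewrite subUset XP (subset_trans AP) ?subsetUr.
  by left; rewrite !mulSn; lia.
rewrite negb_exists_in => /forall_inP spanP.
by exists X => //; right; split=> //; apply: cols_mx_sub => j /spanP /negbNE.
Qed.

Lemma low_rank_subset c :
  rho * c.-1 + c * delta.-1 <= #|P| ->
  exists Y, [/\ Y \subset P, rank_cols Y <= c * rho & rank_cols Y + c * delta.-1 <= #|Y|].
Proof.
move=> roomP; have rank0 := rank_cols_card set0; rewrite cards0 in rank0.
have := leq_mul (leq_pred c) (leqnn rho).
have [X XP [[rankX nullX] | [spanP rankX]]] := greedy_repair_groups set0 c; rewrite set0U in XP.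
  by exists X; split=> //; move: nullX; rewrite cards0; lia.
have := mxrankS spanP; have := rank_cols_card P.
by exists P; split=> //; lia.
Qed.

End Greedy.

Section Localities.
Variables (s : nat) (T : nat -> {set 'I_n}) (r : nat -> nat).
Hypothesis loc : multiple_localities G s T r delta.

Lemma part_repair_groups i : 1 <= i <= s -> forall j, j \in T i ->
  exists A, [/\ A \subset T i, j \in A, delta <= #|A| <= r i + delta - 1 & repair_group A].
Proof.
have [_ [_ [_ [_ [_ groups]]]]] := loc.
move=> si j jT; have [A [AT [jA [cardA gA]]]] := groups i si j jT.
by exists A.
Qed.

Lemma all_repair_groups j : j \in [set: 'I_n] ->
  exists A, [/\ A \subset [set: 'I_n], j \in A, delta <= #|A| <= r s + delta - 1 & repair_group A].
Proof.
have [_ [_ [T_cover [_ [r_mono _]]]]] := loc.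
move=> _; have [i [si jT]] := T_cover j.
have [A [_ jA /andP[geA leA] gA]] := part_repair_groups si jT.
have rs : r i <= r s.
  by case/andP: si => i1 le_is; apply: (r_mono i s i1); rewrite le_is leqnn.
by exists A; split=> //; apply/andP; split=> //; lia.
Qed.

Lemma first_parts_low_rank c :
  (forall i, 1 <= i < s -> r i * (c i).-1 + c i * delta.-1 <= #|T i|) ->
  forall m, m < s -> exists Y, [/\ forall i, m < i <= s -> [disjoint Y & T i],
    rank_cols Y <= \sum_(1 <= i < m.+1) r i * c i &
    rank_cols Y + (\sum_(1 <= i < m.+1) c i) * delta.-1 <= #|Y|].
Proof.
have [_ [T_disj _]] := loc.
move=> room; elim=> [|m IH] lt_ms.
  exists set0; rewrite !big_geq // cards0; split=> //.
  - by move=> i _; rewrite disjoints_subset sub0set.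
  - by have := rank_cols_card set0; rewrite cards0.
  - by rewrite addn0; have := rank_cols_card set0; rewrite cards0.
have [Y [disjY rankY nullY]] := IH (ltnW lt_ms).
have sm : 1 <= m.+1 <= s by exact: ltnW.
have [Z [ZT rankZ nullZ]] := low_rank_subset (part_repair_groups sm) (room m.+1 lt_ms).
have disjT i : m.+1 < i <= s -> [disjoint Z & T i].
  move=> /andP[lt_mi le_is]; apply: disjointWl ZT _.
  by apply: T_disj => //; lia.
exists (Y :|: Z); split.
- move=> i /andP[lt_mi le_is]; rewrite disjoints_subset subUset -!disjoints_subset.
  by rewrite disjY ?disjT ?lt_mi ?le_is ?(ltnW lt_mi).
- rewrite big_nat_recr //=; apply: leq_trans (rank_colsU Y Z) _.
  by rewrite leq_add // mulnC.
- have YZ0 : Y :&: Z = set0.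
    by apply: disjoint_setI0; apply: disjointWr ZT _; apply: disjY; rewrite leqnn.
  rewrite big_nat_recr //= mulnDl cardsU YZ0 cards0 subn0.
  apply: leq_trans (leq_add (rank_colsU Y Z) (leqnn _)) _.
  by rewrite addnACA leq_add.
Qed.

End Localities.

End RepairGroups.

End ColumnRank.

Lemma Delta_succ nT r delta j :
  Delta nT r delta j.+1 - Delta nT r delta j
    = ceildiv (nT j.+1) (r j.+1 + delta - 1) * (delta - 1).
Proof. by rewrite /Delta big_nat_recr //= addKn. Qed.

Lemma Delta_room nT r delta j : 1 < delta -> 0 < j ->
  r j * ceildiv (Delta nT r delta j - Delta nT r delta j.-1 - 1) (delta - 1)
    + (Delta nT r delta j - Delta nT r delta j.-1 - 1) < nT j ->
  r j * (ceildiv (nT j) (r j + delta - 1)).-1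
    + ceildiv (nT j) (r j + delta - 1) * (delta - 1) <= nT j.
Proof.
move=> delta_gt1; case: j => // j _; rewrite Delta_succ /=.
set c := ceildiv (nT j.+1) _; have [-> | c_gt0] := posnP c; first by rewrite muln0.
have b_gt0 : 0 < delta - 1 by rewrite subn_gt0.
have := leq_mul (leqnn (r j.+1)) (pred_leq_ceildiv c b_gt0).
have := leq_mul c_gt0 b_gt0; lia.
Qed.

Theorem corollary1 (F : finFieldType) (n k d s delta : nat)
  (G : 'M[F]_(k, n)) (T : nat -> {set 'I_n}) (r : nat -> nat) :
  (2 <= s)%N -> (2 <= delta)%N ->
  row_free G ->
  is_min_dist G d ->
  multiple_localities G s T r delta ->
  let nT := fun i => #|T i| in
  (\sum_(1 <= i < s) r i * ceildiv (nT i) (r i + delta - 1) + 1 <= k)%N ->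
  (forall j, (1 <= j <= s - 1)%N ->
     r j * ceildiv (Delta nT r delta j - Delta nT r delta j.-1 - 1) (delta - 1)
       + (Delta nT r delta j - Delta nT r delta j.-1 - 1) < nT j)%N ->
  (d + (Gamma nT r delta s k - 1) * (delta - 1) + k <= n + 1)%N.
Proof.
move=> s_ge2 delta_ge2 G_free d_min loc nT room_k room_Delta.
pose c i := ceildiv (nT i) (r i + delta - 1).
have room_parts i : 1 <= i < s -> r i * (c i).-1 + c i * delta.-1 <= #|T i|.
  move=> /andP[i_gt0 lt_is]; rewrite /c -[delta.-1]subn1.
  have i_le : 0 < i <= s - 1 by rewrite i_gt0; lia.
  exact: Delta_room delta_ge2 i_gt0 (room_Delta i i_le).
have lt_s : s.-1 < s by rewrite ltn_predL ltnW.
have [Y [_ rankY nullY]] := first_parts_low_rank loc room_parts lt_s.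
rewrite (ltn_predK s_ge2) /c in rankY nullY; rewrite /Gamma.
set A := \sum_(1 <= i < s) r i * _ in room_k rankY *.
set C := \sum_(1 <= i < s) _ in nullY *.
set g := ceildiv (k - A) (r s).
have [_ [_ [_ [r_gt0 _]]]] := loc.
have rs_gt0 : 0 < r s by apply: r_gt0; rewrite leqnn ltnW.
have g_gt0 : 0 < g by apply: ceildiv_gt0 => //; lia.
have g_lt : g.-1 * r s < k - A by apply: ceildiv_pred_mul_lt => //; lia.
have [X _ [[rankX nullX] | [spanX rankX]]] :=
  greedy_repair_groups (all_repair_groups loc) Y g.-1.
- have ltXk : \rank (cols_mx G X) < k by lia.
  have := singleton_bound_cols G_free d_min ltXk.
  have -> : C + g - 1 = C + g.-1 by lia.
  rewrite mulnDl subn1; lia.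
- have := mxrankS spanX; rewrite rank_colsT //.
  have := leq_mul (leq_pred g.-1) (leqnn (r s)); lia.
Qed.
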